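(* Let $0<\theta<1$, let $\rho,\tau$ be positive integers with $\rho\le\tau$, and let $m$ be a positive integer with $m\neq 2^\beta$ for every integer $\beta\ge0$. Put $T=2^{\lceil\lg m\rceil}-m-1$. Then $$L_m^{\rho/\tau}(\theta)=\int_{-\infty}^{\infty}\ell_m^{\rho/\tau}(\varepsilon)\,f_\theta(\varepsilon)\,d\varepsilon = 1+\lfloor\lg m\rfloor+\frac{1}{2}\,\frac{\theta^{(T+1)/2}}{1-\theta^{m/2}}\left(\theta^{\frac{\rho}{2\tau}}+\theta^{-\frac{\rho}{2\tau}}\right).$$
   Context: $\lg$ denotes $\log_2$. The Laplace density with parameter $\theta\in(0,1)$ is $f_\theta(\varepsilon)=-\frac{\ln\theta}{2}\theta^{|\varepsilon|}$, $\varepsilon\in\mathbb{R}$. The generalized Rice mapping $M:\mathbb{R}\to\mathbb{Z}_{\ge0}$ is $M(\varepsilon)=\lfloor 2\varepsilon\rfloor$ if $\varepsilon\ge 0$ and $M(\varepsilon)=-\lfloor 2\varepsilon\rfloor-1$ if $\varepsilon<0$. For a positive integer $m$, the Golomb codeword of a non-negative integer $N$ consists of $j=\lfloor N/m\rfloor$ in unary ($j+1$ bits) followed by $k=N \bmod m$ in minimal binary, which uses $\lfloor\lg m\rfloor$ bits if $k<2^{\lceil\lg m\rceil}-m$ and $\lceil\lg m\rceil$ bits otherwise; let $\lambda_m(N)$ be the total number of bits. The (finest-precision) code length of a real residual $\varepsilon$ is $\ell_m(\varepsilon)=\lambda_m(M(\varepsilon))$. For positive integers $\rho\le\tau$ (precision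 $\rho/\tau$), the code length assigned to the real residual $\varepsilon$ at precision $\rho/\tau$ is modeled as the finest-precision assignment shifted left by $\rho/(2\tau)$: $\ell_m^{\rho/\tau}(\varepsilon)=\ell_m(\varepsilon+\rho/(2\tau))$. $L_m^{\rho/\tau}(\theta)$ denotes the average code length under the Laplace density, as in the claim. *)

From mathcomp Require Import all_boot all_order all_algebra.
From mathcomp Require Import all_classical all_reals all_analysis.
Set Implicit Arguments. Unset Strict Implicit. Unset Printing Implicit Defensive.
Import Order.TTheory GRing.Theory Num.Theory.
Local Open Scope ring_scope.

Definition flg (m : nat) : nat := trunc_log 2 m.
Definition clg (m : nat) : nat := up_log 2 m.

Definition laplace {R : realType} (theta e : R) : R :=
  - (ln theta) / 2 * theta `^ `|e|.

Definition rice_map {R : realType} (e : R) : nat :=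
  if 0 <= e then `|Num.floor (2 * e)|%N
  else `|- Num.floor (2 * e) - 1|%N.

Definition golomb_len (m N : nat) : nat :=
  let j := (N %/ m)%N in
  let k := (N %% m)%N in
  (j.+1 + (if (k < 2 ^ clg m - m)%N then flg m else clg m))%N.

Definition ell {R : realType} (m : nat) (e : R) : nat := golomb_len m (rice_map e).

Definition ell_prec {R : realType} (m rho tau : nat) (e : R) : R :=
  (ell m (e + rho%:R / (2 * tau%:R)))%:R.

Definition Tm (m : nat) : int := (2 ^ clg m)%:Z - m%:Z - 1.

From mathcomp Require Import all_boot all_order all_algebra.
From mathcomp Require Import all_classical all_reals all_analysis.
From mathcomp Require Import ring lra zify measurable_realfun.
Set Implicit Arguments. Unset Strict Implicit. Unset Printing Implicit Defensive.
Import Order.TTheory GRing.Theory Num.Theory numFieldTopology.Exports.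
Local Open Scope ring_scope.

(* Put [lam = - ln theta], so that [laplace theta x = lam/2 * exp(- lam |x|)].
   For [m] not a power of two, the Golomb length of [N] is [1 + flg m] plus
   the number of [k] with [k m + T + 1 <= N], and the Rice map reaches [n > 0]
   exactly when its argument is [>= n/2] or [< - n/2].  So the code length at
   [x] is [1 + flg m] plus the number of two-sided tails
   [x + s >= t_k/2 \/ x + s < - t_k/2], [t_k = k m + T + 1], containing [x].
   By Tonelli each tail contributes
   [(theta^(t_k/2 - s) + theta^(t_k/2 + s)) / 2], a geometric sequence in [k]
   of ratio [theta^(m/2)]. *)

Lemma rice_map_ge (R : realType) (n : nat) (y : R) : (0 < n)%N ->
  (n <= rice_map y)%N = (n%:R / 2 <= y) || (y < - (n%:R / 2)).
Proof.
move=> n_gt0; rewrite /rice_map.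
have n_pos : (0 : R) < n%:R by rewrite ltr0n.
case: ifPn => hy.
- have fz : 0 <= Num.floor (2 * y) by rewrite floor_ge0; lra.
  rewrite -lez_nat abszE ger0_norm // floor_ge_int.
  have -> : (y < - (n%:R / 2)) = false by apply/negbTE; rewrite -leNgt; lra.
  rewrite orbF /=; rewrite -[(n%:~R)]pmulrn; apply/idP/idP => h; lra.
- rewrite -ltNge in hy.
  have fz : Num.floor (2 * y) < 0 by rewrite floor_lt0; lra.
  have -> : (n%:R / 2 <= y) = false by apply/negbTE; rewrite -ltNge; lra.
  rewrite -lez_nat abszE ger0_norm; last lia.
  have -> : (n%:Z <= - Num.floor (2 * y) - 1) = (Num.floor (2 * y) < (- n%:Z)).
    by apply/idP/idP => h; lia.
  rewrite floor_lt_int rmorphN /= -[(n%:~R)]pmulrn; apply/idP/idP => h; lra.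
Qed.

Lemma sum_progression_le_minn (m T N K : nat) : (0 < m)%N ->
  (\sum_(k < K) (k * m + T <= N) =
   minn K (if T <= N then (N - T) %/ m + 1 else 0))%N.
Proof.
move=> m0; elim: K => [|K IH]; first by rewrite big_ord0 min0n.
rewrite big_ord_recr /= IH.
have := divn_eq (N - T) m; have := ltn_pmod (N - T) m0.
by case: (leqP T N) => hT; case: (leqP (K * m + T) N) => h /=; nia.
Qed.

Lemma sum_progression_leE (m T N K : nat) : (0 < T < m)%N -> (N < K)%N ->
  (\sum_(k < K) (k * m + T <= N) = N %/ m + (T <= N %% m))%N.
Proof.
move=> /andP[T0 Tm] NK; have m0 : (0 < m)%N by lia.
rewrite sum_progression_le_minn // (minn_idPr _); last first.
  by case: ifP => // _; rewrite addn1; apply: leq_ltn_trans (leq_div _ _) _; lia.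
have := divn_eq (N - T) m; have := ltn_pmod (N - T) m0.
have := divn_eq N m; have := ltn_pmod N m0.
by case: (leqP T N) => hT; case: (leqP T (N %% m)) => h /=; nia.
Qed.

Section golomb.
Variable m : nat.
Hypotheses (m_gt0 : (0 < m)%N) (m_nonpow2 : forall b : nat, m <> (2 ^ b)%N).

Lemma flg_nonpow2 : (2 ^ flg m < m)%N.
Proof.
rewrite ltn_neqAle trunc_logP // andbT.
by apply/eqP => E; exact: m_nonpow2 (esym E).
Qed.

Lemma clg_nonpow2 : clg m = (flg m).+1.
Proof. by apply: up_log_eq => //; rewrite flg_nonpow2 ltnW // trunc_log_ltn. Qed.

(* [nshort m] is the paper's [T + 1]: the remainders [k < nshort m] are coded
   with [flg m] bits, the others with [flg m + 1]. *)
Definition nshort : nat := (2 ^ clg m - m)%N.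

Lemma nshort_gt0 : (0 < nshort)%N.
Proof. by rewrite /nshort clg_nonpow2 subn_gt0 trunc_log_ltn. Qed.

Lemma TmE : Tm m = (nshort%:Z - 1)%R.
Proof.
rewrite /Tm /nshort clg_nonpow2.
have := @trunc_log_ltn 2 m isT; move: (2 ^ _)%N => n mn.
by rewrite subzn 1?ltnW.
Qed.

Lemma golomb_lenE (N : nat) :
  golomb_len m N = (1 + flg m + \sum_(k < N.+1) (k * m + nshort <= N))%N.
Proof.
have lt_m := flg_nonpow2; have gt_m := @trunc_log_ltn 2 m isT.
rewrite sum_progression_leE //; last first.
  by rewrite nshort_gt0 /nshort clg_nonpow2 expnS; lia.
by rewrite /golomb_len -/nshort clg_nonpow2; case: ltnP => /=; lia.
Qed.

End golomb.

Section laplace_pdf.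
Context {R : realType}.
Notation mu := (@lebesgue_measure R).
Variable lam : R.
Hypothesis lam_gt0 : 0 < lam.

Definition laplace_pdf (x : R) : R := lam * expR (- lam * `|x|) / 2.

Let continuous_expR_decay : continuous (fun x : R => expR (- lam * x)).
Proof.
move=> x; apply: continuous_comp; last exact: continuous_expR.
by apply: continuousM => //; apply: (@continuousN _ R^o); exact: cst_continuous.
Qed.

Let continuous_exp_pdf : continuous (fun x : R => lam * expR (- lam * x)).
Proof.
move=> x; apply: (@continuousM _ R^o (fun=> lam) (fun x => expR (- lam * x))).
  exact: cst_continuous.
exact: continuous_expR_decay.
Qed.

Lemma integral_exp_pdf_itvy (a : R) : 0 <= a ->
  (\int[mu]_(x in `[a, +oo[) (lam * expR (- lam * x))%:E = (expR (- lam * a))%:E)%E.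
Proof.
move=> a0.
rewrite (@ge0_continuous_FTC2y _ _ (fun x => - expR (- lam * x)) _ 0) //.
- by rewrite EFinN oppeK add0e.
- by move=> x _; rewrite mulr_ge0 ?expR_ge0 ?ltW.
- by move=> x; apply: continuous_subspaceT; exact: continuous_exp_pdf.
- rewrite -oppr0; apply: cvgN.
  rewrite (_ : (fun x => expR (- lam * x)) = (fun z => expR (- z)) \o *%R lam).
    by apply: (@cvg_comp _ _ _ _ _ _ (pinfty_nbhs R)); [exact: gt0_cvgMry|exact: cvgr_expR].
  by apply: eq_fun => x; rewrite mulNr.
- by apply: cvgN; apply/cvg_at_right_filter; exact: continuous_expR_decay.
- move=> x; rewrite in_itv /= andbT => ax.
  rewrite derive1_exponential_pdf; last by rewrite in_itv /= andbT; lra.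
  by rewrite exponential_pdfE ?ltW //; lra.
Qed.

Lemma continuous_laplace_pdf : continuous laplace_pdf.
Proof.
move=> x.
have -> : laplace_pdf = (fun y => lam * expR (- lam * y) / 2) \o Num.norm by [].
apply: continuous_comp; first exact: norm_continuous.
apply: (@continuousM _ R^o _ (fun=> 2^-1)); first exact: continuous_exp_pdf.
exact: cst_continuous.
Qed.

Lemma measurable_laplace_pdf (D : set R) : measurable_fun D laplace_pdf.
Proof.
by apply: measurable_funTS; exact: continuous_measurable_fun continuous_laplace_pdf.
Qed.

Lemma laplace_pdf_ge0 (x : R) : 0 <= laplace_pdf x.
Proof. by rewrite divr_ge0 ?mulr_ge0 ?expR_ge0 ?ltW. Qed.

Lemma integral_laplace_pdf_itvy (a : R) : 0 <= a ->
  (\int[mu]_(x in `[a, +oo[) (laplace_pdf x)%:E = (expR (- lam * a) / 2)%:E)%E.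
Proof.
move=> a0.
transitivity (\int[mu]_(x in `[a, +oo[) ((2^-1)%:E * (lam * expR (- lam * x))%:E))%E.
  apply: eq_integral => x; rewrite inE /= in_itv /= andbT => ax.
  by rewrite /laplace_pdf ger0_norm; [rewrite -EFinM mulrC | lra].
rewrite ge0_integralZl_EFin //.
- by rewrite integral_exp_pdf_itvy // -EFinM mulrC.
- by move=> x _; rewrite lee_fin mulr_ge0 ?expR_ge0 ?ltW.
- apply/measurable_EFinP; apply: measurable_funTS.
  exact: continuous_measurable_fun continuous_exp_pdf.
Qed.

Lemma integral_laplace_pdf_Nyitv (b : R) : b <= 0 ->
  (\int[mu]_(x in `]-oo, b[) (laplace_pdf x)%:E = (expR (lam * b) / 2)%:E)%E.
Proof.
move=> b0.
rewrite integral_itv_bndo_bndc; last by apply/measurable_EFinP; exact: measurable_laplace_pdf.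
rewrite -[b]opprK ge0_integration_by_substitutionNy.
- transitivity (\int[mu]_(x in `[(- b)%R, +oo[) (laplace_pdf x)%:E)%E.
    by apply: eq_integral => x _; rewrite /laplace_pdf /= normrN.
  by rewrite integral_laplace_pdf_itvy ?opprK ?mulrNN //; lra.
- by move=> x; apply: continuous_subspaceT; exact: continuous_laplace_pdf.
- by move=> x _; exact: laplace_pdf_ge0.
Qed.

Lemma integral_laplace_pdf_tails (a b : R) : 0 <= a -> b <= 0 ->
  (\int[mu]_(x in `[a, +oo[ `|` `]-oo, b[) (laplace_pdf x)%:E =
    ((expR (- lam * a) + expR (lam * b)) / 2)%:E)%E.
Proof.
move=> a0 b0; rewrite ge0_integral_setU //=.
- by rewrite integral_laplace_pdf_itvy // integral_laplace_pdf_Nyitv // -EFinD mulrDl.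
- by apply/measurable_EFinP; exact: measurable_laplace_pdf.
- by move=> x _; rewrite lee_fin laplace_pdf_ge0.
- by apply/disj_setPS => x [] /=; rewrite !in_itv /= andbT; lra.
Qed.

Lemma integral_laplace_pdf : (\int[mu]_x (laplace_pdf x)%:E = 1)%E.
Proof.
rewrite -(setUv `[0, +oo[%classic) setCitvr.
by rewrite integral_laplace_pdf_tails // !mulr0 expR0; congr EFin; lra.
Qed.

End laplace_pdf.

Lemma eseries_geometric (R : realType) (a z : R) : 0 <= z < 1 ->
  (\sum_(k <oo) (geometric a z k)%:E = (a / (1 - z))%:E)%E.
Proof.
move=> /andP[z0 z1]; apply/cvg_lim => //.
under eq_fun do rewrite sumEFin.
apply: cvg_EFin; first exact: nearW.
by apply: cvg_geometric_series; rewrite ger0_norm.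
Qed.

Section expected_code_length.
Context {R : realType}.
Notation mu := (@lebesgue_measure R).
Variables (lam s : R) (m : nat).
Hypotheses (lam_gt0 : 0 < lam) (s_small : `|s| <= 1 / 2).
Hypotheses (m_gt0 : (0 < m)%N) (m_nonpow2 : forall b : nat, m <> (2 ^ b)%N).

Definition threshold (k : nat) : R := (k * m + nshort m)%:R.

Definition tail (k : nat) : set R :=
  (`[threshold k / 2 - s, +oo[ `|` `]-oo, - (threshold k / 2) - s[)%classic.

Lemma mem_tail (k : nat) (x : R) :
  (x \in tail k) = (k * m + nshort m <= rice_map (x + s))%N.
Proof.
rewrite rice_map_ge; last by have := nshort_gt0 m_gt0 m_nonpow2; lia.
rewrite /tail in_setU !mem_setE /= !in_itv /= andbT -/(threshold k).
by apply/orP/orP => -[h|h]; [left|right|left|right]; lra.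
Qed.

Lemma measurable_tail (k : nat) : measurable (tail k).
Proof. exact: measurableU. Qed.

Lemma golomb_rice_laplaceE (x : R) :
  ((golomb_len m (rice_map (x + s)))%:R * laplace_pdf lam x)%:E =
  (((1 + flg m)%:R * laplace_pdf lam x)%:E +
   \sum_(k <oo) (laplace_pdf lam x * \1_(tail k) x)%:E)%E.
Proof.
set N := rice_map (x + s).
rewrite (nneseries_split 0 N.+1); last first.
  by move=> k _; rewrite lee_fin mulr_ge0 ?laplace_pdf_ge0.
rewrite eseries0 ?adde0; last first.
  move=> k; rewrite add0n indicE mem_tail -/N => Nk _.
  by rewrite (_ : (_ <= N)%N = false) ?mulr0 //; apply/negbTE; rewrite -ltnNge; nia.
rewrite add0n sumEFin -EFinD golomb_lenE // natrD mulrDl; congr (EFin (_ + _)).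
rewrite natr_sum mulr_suml big_mkord; apply: eq_bigr => k _.
by rewrite indicE mem_tail -/N; case: (_ <= N)%N; rewrite ?mul1r ?mulr1 ?mul0r ?mulr0.
Qed.

Lemma integral_laplace_pdf_tail (k : nat) :
  (\int[mu]_x (laplace_pdf lam x * \1_(tail k) x)%:E =
   (geometric (expR (- lam * ((nshort m)%:R / 2)) * (expR (lam * s) + expR (- lam * s)) / 2)
      (expR (- lam * (m%:R / 2))) k)%:E)%E.
Proof.
transitivity (\int[mu]_(x in tail k) (laplace_pdf lam x)%:E)%E.
  rewrite [RHS]integral_mkcond; apply: eq_integral => x _.
  by rewrite patchE indicE; case: (x \in tail k); rewrite ?mulr1 ?mulr0.
have t_ge1 : 1 <= threshold k.
  by rewrite ler1n; have := nshort_gt0 m_gt0 m_nonpow2; lia.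
move: s_small; rewrite ler_norml => /andP[s_ge s_le].
rewrite integral_laplace_pdf_tails //; last 2 first; [lra | lra |].
congr EFin; rewrite /geometric /threshold natrD natrM.
move: (m%:R) ((nshort m)%:R) => b t.
have eR : - lam * ((k%:R * b + t) / 2 - s) =
  k%:R * (- lam * (b / 2)) + (- lam * (t / 2) + lam * s) by ring.
have eL : lam * (- ((k%:R * b + t) / 2) - s) =
  k%:R * (- lam * (b / 2)) + (- lam * (t / 2) + - lam * s) by ring.
by rewrite eR eL !expRD !expRM_natl /=; ring.
Qed.

Lemma integral_golomb_rice_laplace :
  (\int[mu]_x ((golomb_len m (rice_map (x + s)))%:R * laplace_pdf lam x)%:E =
   ((1 + flg m)%:R + expR (- lam * ((nshort m)%:R / 2)) *
      (expR (lam * s) + expR (- lam * s)) / 2 / (1 - expR (- lam * (m%:R / 2))))%:E)%E.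
Proof.
have tail_ge0 k x : (0 <= (laplace_pdf lam x * \1_(tail k) x)%:E)%E.
  by rewrite lee_fin mulr_ge0 ?laplace_pdf_ge0.
have measurable_tail_pdf k :
    measurable_fun [set: R] (fun x => (laplace_pdf lam x * \1_(tail k) x)%:E).
  apply/measurable_EFinP; apply: measurable_funM; first exact: measurable_laplace_pdf.
  by apply: measurable_indic; exact: measurable_tail.
have measurable_head :
    measurable_fun [set: R] (fun x => ((1 + flg m)%:R * laplace_pdf lam x)%:E).
  apply/measurable_EFinP; apply: measurable_funM => //; exact: measurable_laplace_pdf.
under eq_integral do rewrite golomb_rice_laplaceE.
rewrite ge0_integralD //; last 3 first.
- by move=> x _; rewrite lee_fin mulr_ge0 ?laplace_pdf_ge0.
- by move=> x _; apply: nneseries_ge0.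
- by apply: ge0_emeasurable_sum => // k _; exact: measurable_tail_pdf.
under eq_integral do rewrite EFinM.
rewrite ge0_integralZl_EFin //; last 2 first.
- by move=> x _; rewrite lee_fin laplace_pdf_ge0.
- by apply/measurable_EFinP; exact: measurable_laplace_pdf.
rewrite integral_laplace_pdf // mule1 integral_nneseries //.
under eq_eseriesr do rewrite integral_laplace_pdf_tail.
rewrite eseries_geometric -?EFinD //.
by rewrite expR_ge0 expR_lt1 mulNr oppr_lt0 mulr_gt0 // divr_gt0 // ltr0n.
Qed.

End expected_code_length.

Theorem theorem2 (R : realType) (theta : R) (rho tau m : nat) :
  0 < theta -> theta < 1 ->
  (0 < rho)%N -> (rho <= tau)%N ->
  (0 < m)%N -> (forall beta : nat, m <> (2 ^ beta)%N) ->
  (\int[@lebesgue_measure R]_(x in [set: R])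
      (ell_prec m rho tau x * laplace theta x)%:E =
   (1 + (flg m)%:R
    + 1 / 2 * (theta `^ (((Tm m)%:~R + 1) / 2) / (1 - theta `^ (m%:R / 2)))
      * (theta `^ (rho%:R / (2 * tau%:R)) + theta `^ (- (rho%:R / (2 * tau%:R)))))%:E)%E.
Proof.
move=> theta_gt0 theta_lt1 rho_gt0 rho_le_tau m_gt0 m_nonpow2.
set lam := - ln theta; set s : R := rho%:R / (2 * tau%:R).
have lam_gt0 : 0 < lam by rewrite oppr_gt0 ln_lt0 // theta_gt0 theta_lt1.
have s_small : `|s| <= 1 / 2.
  have tau_gt0 : (0 : R) < tau%:R by rewrite ltr0n; lia.
  have : (rho%:R : R) <= tau%:R by rewrite ler_nat.
  rewrite ger0_norm ?divr_ge0 ?mulr_ge0 ?ler0n // ler_pdivrMr ?mulr_gt0 //; lra.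
have powRE y : theta `^ y = expR (- lam * y).
  by rewrite /powR gt_eqF // /lam opprK mulrC.
transitivity (\int[@lebesgue_measure R]_x
   ((golomb_len m (rice_map (x + s)))%:R * laplace_pdf lam x)%:E)%E.
  by apply: eq_integral => x _; rewrite /laplace powRE mulrAC.
rewrite integral_golomb_rice_laplace // (TmE m_gt0 m_nonpow2) rmorphB /= subrK.
rewrite !powRE mulrNN natrD; congr EFin.
have q_lt1 : expR (- lam * (m%:R / 2)) < 1.
  by rewrite expR_lt1 mulNr oppr_lt0 mulr_gt0 // divr_gt0 // ltr0n.
move: (expR (- lam * (m%:R / 2))) q_lt1 => q q_lt1; field; lra.
Qed.
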